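(* Let $A\in\mathbb{R}^{n\times n}$ be such that $\Lambda_1$ is complex and use the Euclidean norm. For $y_0\in\mathbb{R}^n$ and unit $\hat z_0\in\mathbb{R}^n$ with $w^{(1)}y_0\ne0$ and $w^{(1)}\hat z_0\neq0$, $$\sqrt{\frac{1-V_1}{1+V_1}}\le \mathrm{OT}(t,y_0,\hat z_0)\le\sqrt{\frac{1+V_1}{1-V_1}}\qquad\text{for all }t\in\mathbb{R}.$$ Moreover, if $\gamma_1(\hat z_0)-\gamma_1(\hat y_0)$ is an odd multiple of $\pi/2$, then $$\min_{t\in\mathbb{R}}\mathrm{OT}(t,y_0,\hat z_0)=\sqrt{\frac{1-V_1}{1+V_1}},\qquad \max_{t\in\mathbb{R}}\mathrm{OT}(t,y_0,\hat z_0)=\sqrt{\frac{1+V_1}{1-V_1}}.$$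
   Context: $\Lambda_1$ complex: the eigenvalues of $A$ with maximal real part are exactly a pair of simple complex conjugate eigenvalues $\lambda_1,\overline{\lambda_1}$, $\omega_1=\operatorname{Im}\lambda_1>0$. $w^{(1)}$ (row) and $v^{(1)}$ (column) are left and right eigenvectors for $\lambda_1$, $\hat w^{(1)}=w^{(1)}/\|w^{(1)}\|_2$, $\hat v^{(1)}=v^{(1)}/\|v^{(1)}\|_2$. $V_1=|(\hat v^{(1)})^T\hat v^{(1)}|\in[0,1)$ ($^T$ = transpose without conjugation). $\hat y_0=y_0/\|y_0\|_2$. Polar forms: $\hat v^{(1)}_k=|\hat v^{(1)}_k|e^{\sqrt{-1}\alpha_{1k}}$, and for real $u$ with $w^{(1)}u\ne0$, $\hat w^{(1)}u=|\hat w^{(1)}u|e^{\sqrt{-1}\gamma_1(u)}$. $\hat\Theta_1(t,u)=\big(|\hat v^{(1)}_k|\cos(\omega_1t+\alpha_{1k}+\gamma_1(u))\big)_{k=1}^n$, and $\mathrm{OT}(t,y_0,\hat z_0)=\|\hat\Theta_1(t,\hat z_0)\|_2/\|\hat\Theta_1(t,\hat y_0)\|_2$. *)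

From HB Require Import structures.
From mathcomp Require Import all_boot all_order all_algebra.
From mathcomp Require Import complex.
From mathcomp Require Import reals trigo.
Set Implicit Arguments. Unset Strict Implicit. Unset Printing Implicit Defensive.
Import Order.TTheory GRing.Theory Num.Theory.
Local Open Scope ring_scope.

Section Defs.
Variable R : realType.
Variable n : nat.

Definition cR (x : R) : R[i] := Complex x 0.
Definition cmx m p (A : 'M[R]_(m, p)) : 'M[R[i]]_(m, p) := map_mx cR A.
Definition cmod (z : R[i]) : R := Num.sqrt (complex.Re z ^+ 2 + complex.Im z ^+ 2).
Definition cexpi (a : R) : R[i] := Complex (cos a) (sin a).

Definition rnorm (u : 'cV[R]_n) : R := Num.sqrt (\sum_k u k 0 ^+ 2).
Definition cnorm_col (v : 'cV[R[i]]_n) : R := Num.sqrt (\sum_k cmod (v k 0) ^+ 2).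
Definition cnorm_row (w : 'rV[R[i]]_n) : R := Num.sqrt (\sum_k cmod (w 0 k) ^+ 2).

Definition rhat (u : 'cV[R]_n) : 'cV[R]_n := (rnorm u)^-1 *: u.
Definition vhat (v : 'cV[R[i]]_n) : 'cV[R[i]]_n := cR (cnorm_col v)^-1 *: v.
Definition what (w : 'rV[R[i]]_n) : 'rV[R[i]]_n := cR (cnorm_row w)^-1 *: w.

Definition wu (w : 'rV[R[i]]_n) (u : 'cV[R]_n) : R[i] := (w *m cmx u) 0 0.

(* V_1 = | (vhat)^T vhat |  (transpose without conjugation) *)
Definition V1 (v : 'cV[R[i]]_n) : R := cmod (((vhat v)^T *m vhat v) 0 0).

(* hat Theta_1(t,u), where gam = gamma_1(u), om = omega_1, al = (alpha_{1k})_k *)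
Definition Theta (v : 'cV[R[i]]_n) (om : R) (al : 'I_n -> R) (gam : R) (t : R)
  : 'cV[R]_n := \col_k (cmod (vhat v k 0) * cos (om * t + al k + gam)).

(* OT(t, y0, zhat0), with gy = gamma_1(yhat0), gz = gamma_1(zhat0) *)
Definition OT (v : 'cV[R[i]]_n) (om : R) (al : 'I_n -> R) (gy gz : R) (t : R) : R :=
  rnorm (Theta v om al gz t) / rnorm (Theta v om al gy t).

End Defs.

From HB Require Import structures.
From mathcomp Require Import all_boot all_order all_algebra.
From mathcomp Require Import complex.
From mathcomp Require Import reals trigo.
From mathcomp Require Import ring lra.
Set Implicit Arguments.
Unset Strict Implicit.
Unset Printing Implicit Defensive.
Import Order.TTheory GRing.Theory Num.Theory.
Local Open Scope ring_scope.

(* Write the unit eigenvector v^ as x + i y with x, y real.  The polar forms give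
   Theta^_1(t,u)_k = x_k cos phi - y_k sin phi with phi = omega_1 t + gamma_1(u),
   so the double-angle formulas yield
     2 |Theta^_1(t,u)|^2 = 1 + Re (e^{2 i phi} v^T v),   with |v^T v| = V_1.
   Hence OT^2 = (1 + h_z) / (1 + h_y), where each h_u = Re (e^{2 i phi} v^T v)
   lies in [-V_1, V_1]; this gives the bounds once V_1 < 1.  The latter holds
   because V_1^2 = 1 - 4 det G for the Gram matrix G of x and y, and x, y are
   linearly independent: as A is real, proportional x and y would force
   Im lambda_1 = 0.  When gamma_1(z^) - gamma_1(y^) is an odd multiple of pi/2,
   the two phases differ by an odd multiple of pi, so OT^2 = (1 - h_y) / (1 + h_y),
   and h_y reaches both V_1 and -V_1 as t varies. *)

Lemma periodicz (U V : zmodType) (f : U -> V) (T : U) :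
  periodic f T -> forall (k : int) a, f (a + T *~ k) = f a.
Proof.
move=> fT [] m a; first exact: periodicn.
by rewrite NegzE mulrNz -(periodicn fT m.+1) subrK.
Qed.

Section Trigonometry.
Variable R : realType.

Lemma cos_sin_onto (p q : R) :
  p ^+ 2 + q ^+ 2 = 1 -> exists th, cos th = p /\ sin th = q.
Proof.
move=> pq1.
have p_itv : -1 <= p <= 1 by apply/andP; split; nra.
have cos_acos : cos (acos p) = p by rewrite acosK // in_itv.
have sin_acos : sin (acos p) = `|q|.
  by rewrite sin_acos // -pq1 addrAC subrr add0r sqrtr_sqr.
have [q_ge0|q_lt0] := lerP 0 q.
- by exists (acos p); rewrite cos_acos sin_acos ger0_norm.
- by exists (- acos p); rewrite cosN sinN cos_acos sin_acos ltr0_norm // opprK.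
Qed.

Lemma oddpiE (k : int) : (2 * k + 1)%:~R * pi = pi + (pi *+ 2) *~ k :> R.
Proof. by rewrite -mulrzr intrD intrM /=; ring. Qed.

Lemma cosDoddpi (k : int) (x : R) : cos (x + (2 * k + 1)%:~R * pi) = - cos x.
Proof. by rewrite oddpiE addrA (periodicz (@cosD2pi R)) cosDpi. Qed.

Lemma sinDoddpi (k : int) (x : R) : sin (x + (2 * k + 1)%:~R * pi) = - sin x.
Proof. by rewrite oddpiE addrA (periodicz (@sinD2pi R)) sinDpi. Qed.

End Trigonometry.

Section ComplexPolar.
Variable R : realType.

Lemma cexpiDoddpi (k : int) (th : R) :
  cexpi (th + (2 * k + 1)%:~R * pi) = - cexpi th.
Proof. by rewrite /cexpi cosDoddpi sinDoddpi. Qed.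

Lemma cmodN (z : R[i]) : cmod (- z) = cmod z.
Proof. by case: z => a b; rewrite /cmod /= !sqrrN. Qed.

Lemma Re_mulc (z w : R[i]) :
  complex.Re (z * w) = complex.Re z * complex.Re w - complex.Im z * complex.Im w.
Proof. by case: z; case: w. Qed.

Lemma Im_mulc (z w : R[i]) :
  complex.Im (z * w) = complex.Re z * complex.Im w + complex.Im z * complex.Re w.
Proof. by case: z; case: w => a b c d /=; ring. Qed.

Lemma Re_mul_cexpi_le (z : R[i]) th : `|complex.Re (z * cexpi th)| <= cmod z.
Proof.
rewrite Re_mulc -sqrtr_sqr ler_wsqrtr //.
case: z => a b /=; rewrite -subr_ge0.
have -> : a ^+ 2 + b ^+ 2 - (a * cos th - b * sin th) ^+ 2
        = (a ^+ 2 + b ^+ 2) * (1 - (cos th ^+ 2 + sin th ^+ 2))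
          + (a * sin th + b * cos th) ^+ 2 by ring.
by rewrite cos2Dsin2 subrr mulr0 add0r sqr_ge0.
Qed.

Lemma Re_mul_cexpi_max (z : R[i]) : exists th, complex.Re (z * cexpi th) = cmod z.
Proof.
case: z => a b; rewrite /cmod /=; set V := Num.sqrt _.
have V2 : V ^+ 2 = a ^+ 2 + b ^+ 2 by rewrite sqr_sqrtr // addr_ge0 ?sqr_ge0.
have [V0|V0] := eqVneq V 0.
  have /eqP : a ^+ 2 + b ^+ 2 = 0 by rewrite -V2 V0 expr0n.
  rewrite paddr_eq0 ?sqr_ge0 // !sqrf_eq0 => /andP[/eqP-> /eqP->].
  by exists 0; rewrite V0 /= !mul0r subr0.
have [th [cos_th sin_th]] : exists th, cos th = a / V /\ sin th = - (b / V).
  apply: cos_sin_onto; rewrite sqrrN !expr_div_n -mulrDl -V2 divff //.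
  exact: expf_neq0.
exists th; rewrite /cexpi /= cos_th sin_th.
by apply: (mulfI V0); rewrite -[in RHS]expr2 V2; field.
Qed.

Lemma polar_Re_Im (z : R[i]) a : z = cR (cmod z) * cexpi a ->
  complex.Re z = cmod z * cos a /\ complex.Im z = cmod z * sin a.
Proof.
by move=> zE; split; rewrite {1}zE ?Re_mulc ?Im_mulc /= mul0r ?subr0 ?addr0.
Qed.

End ComplexPolar.

Lemma ratio_bounds (R : realFieldType) (V h1 h2 : R) :
  V < 1 -> `|h1| <= V -> `|h2| <= V ->
  (1 - V) / (1 + V) <= (1 + h1) / (1 + h2) <= (1 + V) / (1 - V).
Proof.
rewrite !ler_norml => V_lt1 /andP[h1l h1r] /andP[h2l h2r].
have h2_pos : 0 < 1 + h2 by lra.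
have V_pos : 0 < 1 + V by lra.
have V_neg : 0 < 1 - V by lra.
apply/andP; split.
- by rewrite ler_pdivlMr // mulrAC ler_pdivrMr //; nra.
- by rewrite ler_pdivrMr // mulrAC ler_pdivlMr //; nra.
Qed.

Lemma sum_sqr_linear_comb (R : comRingType) n (x y : 'I_n -> R) (c s : R) :
  \sum_k (x k * c - y k * s) ^+ 2 =
  c ^+ 2 * \sum_k x k ^+ 2 - 2 * (c * s) * \sum_k x k * y k + s ^+ 2 * \sum_k y k ^+ 2.
Proof.
rewrite !mulr_sumr -sumrB -big_split /=.
by apply: eq_bigr => k _; ring.
Qed.

Lemma lagrange_identity (R : comRingType) n (x y : 'I_n -> R) :
  \sum_j \sum_m (y j * x m - x j * y m) ^+ 2 =
  2 * ((\sum_j x j ^+ 2) * (\sum_j y j ^+ 2) - (\sum_j x j * y j) ^+ 2).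
Proof.
transitivity (\sum_j (y j ^+ 2 * \sum_m x m ^+ 2 + x j ^+ 2 * \sum_m y m ^+ 2
   - 2 * (x j * y j) * \sum_m x m * y m)).
  apply: eq_bigr => j _; rewrite !mulr_sumr -big_split -sumrB /=.
  by apply: eq_bigr => m _; ring.
by rewrite sumrB big_split /= -!mulr_suml -mulr_sumr; ring.
Qed.

Lemma proportional_of_gram_le0 (R : realDomainType) n (x y : 'I_n -> R) :
  (\sum_j x j ^+ 2) * (\sum_j y j ^+ 2) <= (\sum_j x j * y j) ^+ 2 ->
  forall j m, y j * x m = x j * y m.
Proof.
move=> gram_le0 j m; apply/eqP; rewrite -subr_eq0 -sqrf_eq0.
have cross_eq0 : \sum_j \sum_m (y j * x m - x j * y m) ^+ 2 = 0.
  apply/eqP; rewrite eq_le; apply/andP; split.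
    by rewrite lagrange_identity pmulr_rle0 // subr_le0.
  by apply: sumr_ge0 => i _; apply: sumr_ge0 => k _; apply: sqr_ge0.
have /psumr_eq0P row_eq0 := cross_eq0.
have /psumr_eq0P -> // := row_eq0 (fun i _ => sumr_ge0 _ (fun k _ => sqr_ge0 _)) j isT.
by move=> k _; rewrite sqr_ge0.
Qed.

Section ComplexColumns.
Variables (R : realType) (n : nat).
Implicit Types (u : 'cV[R[i]]_n) (z : R[i]).

Definition Re_col u k : R := complex.Re (u k 0).
Definition Im_col u k : R := complex.Im (u k 0).
(* The paper's (v^)^T v^, without conjugation: [V1 v] is [cmod (tdot (vhat v))]. *)
Definition tdot u : R[i] := (u^T *m u) 0 0.

Lemma sqr_cmod z : cmod z ^+ 2 = complex.Re z ^+ 2 + complex.Im z ^+ 2.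
Proof. by rewrite sqr_sqrtr // addr_ge0 ?sqr_ge0. Qed.

Lemma sqr_cnorm_col u :
  cnorm_col u ^+ 2 = \sum_k Re_col u k ^+ 2 + \sum_k Im_col u k ^+ 2.
Proof.
rewrite sqr_sqrtr; last by apply: sumr_ge0 => k _; apply: sqr_ge0.
by rewrite -big_split; apply: eq_bigr => k _; apply: sqr_cmod.
Qed.

Lemma cnorm_col_eq0 u : (cnorm_col u == 0) = (u == 0).
Proof.
apply/idP/eqP => [/eqP norm0|->]; last first.
  by rewrite /cnorm_col big1 ?sqrtr0 // => k _; rewrite mxE /cmod /= expr0n addr0 sqrtr0 expr0n.
apply/matrixP => k j; rewrite (ord1 j) mxE.
have /esym/eqP := sqr_cnorm_col u; rewrite norm0 expr0n -big_split /=.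
rewrite psumr_eq0 => [/allP/(_ k (mem_index_enum k))|i _]; last by rewrite addr_ge0 ?sqr_ge0.
rewrite /= paddr_eq0 ?sqr_ge0 // !sqrf_eq0 /Re_col /Im_col.
by case: (u k 0) => a b /= /andP[/eqP-> /eqP->].
Qed.

Lemma cnorm_colZ (c : R) u : cnorm_col (cR c *: u) = `|c| * cnorm_col u.
Proof.
rewrite /cnorm_col -sqrtr_sqr -sqrtrM ?sqr_ge0 // mulr_sumr.
by congr Num.sqrt; apply: eq_bigr => k _; rewrite mxE !sqr_cmod Re_mulc Im_mulc /=; ring.
Qed.

Lemma cnorm_col_vhat u : u != 0 -> cnorm_col (vhat u) = 1.
Proof.
move=> u0; rewrite /vhat cnorm_colZ ger0_norm ?invr_ge0 ?sqrtr_ge0 // mulVf //.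
by rewrite cnorm_col_eq0.
Qed.

Lemma Re_tdot u :
  complex.Re (tdot u) = \sum_k Re_col u k ^+ 2 - \sum_k Im_col u k ^+ 2.
Proof.
rewrite /tdot mxE raddf_sum -sumrB; apply: eq_bigr => k _.
by rewrite /= mxE Re_mulc !expr2.
Qed.

Lemma Im_tdot u : complex.Im (tdot u) = 2 * \sum_k Re_col u k * Im_col u k.
Proof.
rewrite /tdot mxE raddf_sum mulr_sumr; apply: eq_bigr => k _.
by rewrite /= mxE Im_mulc /Re_col /Im_col; ring.
Qed.

Variable A : 'M[R]_n.

Lemma eigen_Re_Im u l : cmx A *m u = l *: u -> forall j,
  \sum_m A j m * Re_col u m = complex.Re l * Re_col u j - complex.Im l * Im_col u j /\
  \sum_m A j m * Im_col u m = complex.Re l * Im_col u j + complex.Im l * Re_col u j.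
Proof.
move=> Au j; have := congr1 (fun M : 'M[R[i]]_(n, 1) => M j 0) Au; rewrite /= !mxE => Auj.
split; [move/(congr1 (@complex.Re R)): Auj | move/(congr1 (@complex.Im R)): Auj];
  rewrite raddf_sum ?Re_mulc ?Im_mulc => <-; apply: eq_bigr => m _;
  by rewrite /= mxE ?Re_mulc ?Im_mulc /= mul0r ?subr0 ?addr0.
Qed.

Lemma gram_Re_Im_gt0 u l : cmx A *m u = l *: u -> complex.Im l != 0 -> u != 0 ->
  0 < (\sum_k Re_col u k ^+ 2) * (\sum_k Im_col u k ^+ 2)
      - (\sum_k Re_col u k * Im_col u k) ^+ 2.
Proof.
move=> Au Iml u0; set x := Re_col u; set y := Im_col u.
rewrite subr_gt0 ltNge; apply: contra Iml => /proportional_of_gram_le0 prop.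
(* A is real, so y.(A x) - x.(A y) = - Im l |u|^2; it vanishes when x, y are proportional. *)
have twisted : - complex.Im l * cnorm_col u ^+ 2
               = \sum_j \sum_m A j m * (y j * x m - x j * y m).
  rewrite sqr_cnorm_col -big_split /= mulr_sumr.
  transitivity (\sum_j (y j * \sum_m A j m * x m - x j * \sum_m A j m * y m)).
    by apply: eq_bigr => j _; have [-> ->] := eigen_Re_Im Au j; ring.
  by apply: eq_bigr => j _; rewrite !mulr_sumr -sumrB; apply: eq_bigr => m _; ring.
move: twisted; rewrite big1 => [|j _]; last first.
  by rewrite big1 // => m _; rewrite prop subrr mulr0.
by move/eqP; rewrite mulf_eq0 oppr_eq0 sqrf_eq0 cnorm_col_eq0 (negPf u0) orbF.
Qed.

Lemma V1_lt1 v l : cmx A *m v = l *: v -> complex.Im l != 0 -> v != 0 -> V1 v < 1.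
Proof.
move=> Av Iml v0; set u := vhat v.
have u_norm1 : cnorm_col u = 1 := cnorm_col_vhat v0.
have u0 : u != 0 by rewrite -cnorm_col_eq0 u_norm1 oner_eq0.
have Au : cmx A *m u = l *: u by rewrite /u /vhat -scalemxAr Av !scalerA mulrC.
have gram := gram_Re_Im_gt0 Au Iml u0.
have V1_sqr : V1 v ^+ 2 = (cnorm_col u ^+ 2) ^+ 2 - 4 * ((\sum_k Re_col u k ^+ 2)
    * (\sum_k Im_col u k ^+ 2) - (\sum_k Re_col u k * Im_col u k) ^+ 2).
  by rewrite sqr_cmod -/(tdot u) Re_tdot Im_tdot sqr_cnorm_col; ring.
have V1_ge0 : 0 <= V1 v by apply: sqrtr_ge0.
rewrite u_norm1 !expr1n in V1_sqr; nra.
Qed.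

End ComplexColumns.

Section OrbitalTrace.
Variables (R : realType) (n : nat) (v : 'cV[R[i]]_n) (om : R) (al : 'I_n -> R).
Hypothesis v_neq0 : v != 0.
Hypothesis v_polar : forall k, vhat v k 0 = cR (cmod (vhat v k 0)) * cexpi (al k).

Lemma sqr_rnorm_Theta gam t : 2 * rnorm (Theta v om al gam t) ^+ 2
  = 1 + complex.Re (tdot (vhat v) * cexpi (2 * (om * t + gam))).
Proof.
set u := vhat v; set phi := om * t + gam.
have Theta_k k :
    Theta v om al gam t k 0 = Re_col u k * cos phi - Im_col u k * sin phi.
  have [Re_k Im_k] := polar_Re_Im (v_polar k).
  by rewrite mxE /Re_col /Im_col -/u Re_k Im_k (addrAC _ (al k)) cosD /phi; ring.
have norm1 : \sum_k Re_col u k ^+ 2 + \sum_k Im_col u k ^+ 2 = 1.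
  by rewrite -sqr_cnorm_col cnorm_col_vhat // expr1n.
transitivity ((\sum_k Re_col u k ^+ 2 + \sum_k Im_col u k ^+ 2)
                * (cos phi ^+ 2 + sin phi ^+ 2)
              + complex.Re (tdot u * cexpi (phi + phi))).
  rewrite /rnorm sqr_sqrtr; last by apply: sumr_ge0 => k _; apply: sqr_ge0.
  under eq_bigr do rewrite Theta_k.
  by rewrite sum_sqr_linear_comb Re_mulc Re_tdot Im_tdot /= (cosD phi phi) (sinD phi phi); ring.
by rewrite cos2Dsin2 mulr1 norm1 -mulr2n mulr_natl.
Qed.

Lemma OTE gy gz t : OT v om al gy gz t =
  Num.sqrt ((1 + complex.Re (tdot (vhat v) * cexpi (2 * (om * t + gz))))
          / (1 + complex.Re (tdot (vhat v) * cexpi (2 * (om * t + gy))))).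
Proof.
have rnormE gam : rnorm (Theta v om al gam t)
    = Num.sqrt ((1 + complex.Re (tdot (vhat v) * cexpi (2 * (om * t + gam)))) / 2).
  by rewrite -sqr_rnorm_Theta [2 * _]mulrC mulfK ?pnatr_eq0 // sqrtr_sqr ger0_norm // sqrtr_ge0.
have half_ge0 gam : 0 <= (1 + complex.Re (tdot (vhat v) * cexpi (2 * (om * t + gam)))) / 2.
  by rewrite -sqr_rnorm_Theta [2 * _]mulrC mulfK ?pnatr_eq0 // sqr_ge0.
by rewrite /OT !rnormE -sqrtrV // -sqrtrM // invf_div mulrA divfK ?pnatr_eq0.
Qed.

Lemma OT_bounds gy gz t : V1 v < 1 ->
  Num.sqrt ((1 - V1 v) / (1 + V1 v)) <= OT v om al gy gz t
  <= Num.sqrt ((1 + V1 v) / (1 - V1 v)).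
Proof.
move=> V1_lt1; rewrite OTE.
have /andP[lo hi] := ratio_bounds V1_lt1 (Re_mul_cexpi_le _ (2 * (om * t + gz)))
  (Re_mul_cexpi_le _ (2 * (om * t + gy))).
by rewrite !ler_wsqrtr.
Qed.

Lemma OT_extrema gy gz : om != 0 ->
  (exists k : int, gz - gy = (2 * k + 1)%:~R * (pi / 2)) ->
  (exists t, OT v om al gy gz t = Num.sqrt ((1 - V1 v) / (1 + V1 v))) /\
  (exists t, OT v om al gy gz t = Num.sqrt ((1 + V1 v) / (1 - V1 v))).
Proof.
move=> om0 [k gzE]; set s := tdot (vhat v).
have OT_antiphase t : OT v om al gy gz t =
    Num.sqrt ((1 - complex.Re (s * cexpi (2 * (om * t + gy))))
            / (1 + complex.Re (s * cexpi (2 * (om * t + gy))))).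
  rewrite OTE; have -> : 2 * (om * t + gz) = 2 * (om * t + gy) + (2 * k + 1)%:~R * pi.
    by rewrite -(subrK gy gz) gzE; field.
  by rewrite cexpiDoddpi mulrN raddfN.
have reach th : exists t, complex.Re (s * cexpi (2 * (om * t + gy))) = complex.Re (s * cexpi th).
  by exists ((th / 2 - gy) / om); congr (complex.Re (s * cexpi _)); field.
split.
- have [th sth] := Re_mul_cexpi_max s; have [t st] := reach th.
  by exists t; rewrite OT_antiphase st sth.
- have [th sth] := Re_mul_cexpi_max (- s); have [t st] := reach th.
  have Re_min : complex.Re (s * cexpi th) = - cmod s.
    by rewrite -cmodN -sth mulNr raddfN /= opprK.
  by exists t; rewrite OT_antiphase st Re_min opprK.
Qed.

End OrbitalTrace.

Theorem theorem9 (R : realType) (n : nat) (A : 'M[R]_n) (l1 : R[i])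
    (w : 'rV[R[i]]_n) (v : 'cV[R[i]]_n) (y0 zh : 'cV[R]_n)
    (alpha : 'I_n -> R) (gy gz : R) :
  eigenvalue (cmx A) l1 ->
  0 < complex.Im l1 ->
  mup l1 (char_poly (cmx A)) = 1%N ->
  mup (conjc l1) (char_poly (cmx A)) = 1%N ->
  (forall mu, eigenvalue (cmx A) mu -> complex.Re mu <= complex.Re l1) ->
  (forall mu, eigenvalue (cmx A) mu -> complex.Re mu = complex.Re l1 -> mu = l1 \/ mu = conjc l1) ->
  w != 0 -> w *m cmx A = l1 *: w ->
  v != 0 -> cmx A *m v = l1 *: v ->
  (forall k, vhat v k 0 = cR (cmod (vhat v k 0)) * cexpi (alpha k)) ->
  rnorm zh = 1 ->
  wu w y0 != 0 -> wu w zh != 0 ->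
  wu (what w) (rhat y0) = cR (cmod (wu (what w) (rhat y0))) * cexpi gy ->
  wu (what w) zh = cR (cmod (wu (what w) zh)) * cexpi gz ->
  (forall t : R,
     Num.sqrt ((1 - V1 v) / (1 + V1 v)) <= OT v (complex.Im l1) alpha gy gz t
     <= Num.sqrt ((1 + V1 v) / (1 - V1 v))) /\
  ((exists k : int, gz - gy = (2 * k + 1)%:~R * (pi / 2)) ->
     (exists t : R, OT v (complex.Im l1) alpha gy gz t = Num.sqrt ((1 - V1 v) / (1 + V1 v))) /\
     (exists t : R, OT v (complex.Im l1) alpha gy gz t = Num.sqrt ((1 + V1 v) / (1 - V1 v)))).
Proof.
move=> _ Im_l1_gt0 _ _ _ _ _ _ v_neq0 Av v_polar _ _ _ _ _.
have Im_l1_neq0 : complex.Im l1 != 0 by rewrite gt_eqF.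
split=> [t|].
  exact: OT_bounds v_neq0 v_polar _ _ _ (V1_lt1 Av Im_l1_neq0 v_neq0).
exact: OT_extrema v_neq0 v_polar _ _ Im_l1_neq0.
Qed.
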